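(* Consider the two-player game described in the context, with initial state $\mathbf{x}=(x,y)$. An equilibrium (Nash) pair of policies is $$(\psi_{\rm NE},T_{\rm NE})=\Big(\cos^{-1}\mu,\ \max\Big\{x-\tfrac{\mu}{\sqrt{1-\mu^2}}\,y,\ 0\Big\}\Big),$$ where $\psi_{\rm NE}$ means the Evader holds the constant heading $\cos^{-1}\mu$.
   Context: Pursuer-fixed frame: the Evader's relative position $\mathbf{x}(t)=(x(t),y(t))\in\mathbb{R}^2$ evolves as $\dot x=\mu\cos\psi(t)-1$, $\dot y=\mu\sin\psi(t)$, with $\mu\in(0,1)$. Game: the Evader chooses its heading trajectory $\psi(\cdot)$ subject to the constraint $\|\mathbf{x}(t)\|\ge1$ on $[0,T]$, and the Pursuer chooses the final time $T\ge0$; the payoff is the final distance $\|\mathbf{x}(T)\|$, which the Evader maximizes and the Pursuer minimizes. An equilibrium pair is one from which neither player benefits by unilateral deviation. The paper assumes $y\ge0$ throughout. *)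

From HB Require Import structures.
From mathcomp Require Import all_boot all_order all_algebra.
From mathcomp Require Import all_classical all_reals all_analysis.
Set Implicit Arguments. Unset Strict Implicit. Unset Printing Implicit Defensive.
Import Order.TTheory GRing.Theory Num.Theory.
Import numFieldNormedType.Exports.
Local Open Scope classical_set_scope.
Local Open Scope ring_scope.

Section Game.
Context {R : realType}.

(* Evader's relative position under heading psi (Caratheodory solution of
   xdot = mu cos psi - 1, ydot = mu sin psi, with x(0) = x0, y(0) = y0). *)
Definition traj_x (mu x0 : R) (psi : R -> R) (t : R) : R :=
  x0 + \int[lebesgue_measure]_(s in `[0, t]) (mu * cos (psi s) - 1).
Definition traj_y (mu y0 : R) (psi : R -> R) (t : R) : R :=
  y0 + \int[lebesgue_measure]_(s in `[0, t]) (mu * sin (psi s)).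

Definition dist_at (mu x0 y0 : R) (psi : R -> R) (t : R) : R :=
  Num.sqrt (traj_x mu x0 psi t ^+ 2 + traj_y mu y0 psi t ^+ 2).

Definition admissible (mu x0 y0 : R) (psi : R -> R) (T : R) : Prop :=
  0 <= T /\ measurable_fun setT psi /\
  (forall t, 0 <= t <= T -> 1 <= dist_at mu x0 y0 psi t).

(* Nash equilibrium: the pair is feasible, the Evader (maximizer) cannot
   increase the payoff by changing psi, the Pursuer (minimizer) cannot
   decrease it by changing T. *)
Definition is_equilibrium (mu x0 y0 : R) (psi : R -> R) (T : R) : Prop :=
  admissible mu x0 y0 psi T /\
  (forall psi', admissible mu x0 y0 psi' T ->
     dist_at mu x0 y0 psi' T <= dist_at mu x0 y0 psi T) /\
  (forall T', admissible mu x0 y0 psi T' ->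
     dist_at mu x0 y0 psi T <= dist_at mu x0 y0 psi T').

Definition psi_NE (mu : R) : R -> R := fun _ => acos mu.
Definition T_NE (mu x0 y0 : R) : R :=
  Num.max (x0 - mu / Num.sqrt (1 - mu ^+ 2) * y0) 0.

End Game.

(* For any measurable heading, the evader's position at time t lies in the disk
   of radius mu t around the drift point (x0 - t, y0), so its distance is at most
   |(x0 - t, y0)| + mu t.  The heading acos mu has unit vector u = (mu, s) with
   s = sqrt (1 - mu^2).  At T = max (x0 - mu y0 / s) 0 either T = 0 or the drift
   point is a nonnegative multiple of u, and in both cases running along u attains
   the bound.  Along u the squared distance is a convex quadratic in t with vertex
   x0 - mu y0 / s, so over t >= 0 the pursuer can do no better than T. *)

From HB Require Import structures.
From mathcomp Require Import all_boot all_order all_algebra.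
From mathcomp Require Import all_classical all_reals all_analysis.
From mathcomp Require Import measurable_realfun.
From mathcomp Require Import ring lra.
Import Order.TTheory GRing.Theory Num.Theory.
Import numFieldNormedType.Exports.
Local Open Scope classical_set_scope.
Local Open Scope ring_scope.

Section Hypot.
Context {R : rcfType}.

Definition hypot (a b : R) : R := Num.sqrt (a ^+ 2 + b ^+ 2).

Lemma hypot_ge0 (a b : R) : 0 <= hypot a b.
Proof. exact: sqrtr_ge0. Qed.

Lemma sqr_hypot (a b : R) : hypot a b ^+ 2 = a ^+ 2 + b ^+ 2.
Proof. by rewrite sqr_sqrtr // addr_ge0 ?sqr_ge0. Qed.

Lemma hypotZ (k a b : R) : hypot (k * a) (k * b) = `|k| * hypot a b.
Proof. by rewrite /hypot !exprMn -mulrDr sqrtrM ?sqr_ge0 // sqrtr_sqr. Qed.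

Lemma ler_dot_hypot (a1 a2 b1 b2 : R) :
  a1 * b1 + a2 * b2 <= hypot a1 a2 * hypot b1 b2.
Proof.
apply: le_trans (ler_norm _) _.
rewrite -sqrtr_sqr -sqrtrM ?addr_ge0 ?sqr_ge0 //; apply: ler_wsqrtr.
(* Lagrange's identity *)
rewrite -subr_ge0.
have -> : (a1 ^+ 2 + a2 ^+ 2) * (b1 ^+ 2 + b2 ^+ 2) - (a1 * b1 + a2 * b2) ^+ 2
  = (a1 * b2 - a2 * b1) ^+ 2 by ring.
exact: sqr_ge0.
Qed.

Lemma ler_hypotD (a1 a2 b1 b2 : R) :
  hypot (a1 + b1) (a2 + b2) <= hypot a1 a2 + hypot b1 b2.
Proof.
rewrite -(ger0_norm (addr_ge0 (hypot_ge0 a1 a2) (hypot_ge0 b1 b2))) -sqrtr_sqr.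
apply: ler_wsqrtr.
have := ler_dot_hypot a1 a2 b1 b2.
rewrite (sqrrD (hypot a1 a2)) !sqr_hypot; nra.
Qed.

End Hypot.

Lemma hypot_cos_sin {R : realType} (x : R) : hypot (cos x) (sin x) = 1.
Proof. by rewrite /hypot cos2Dsin2 sqrtr1. Qed.

Section IntegralsOnSegment.
Context {R : realType}.
Notation leb := (@lebesgue_measure R).

Lemma lebesgue_measure_itv0 (t : R) : 0 <= t -> leb `[0, t] = t%:E.
Proof.
move=> t0; rewrite lebesgue_measure_itv /= lte_fin.
case: ltP => [_|tle]; first by rewrite oppr0 adde0.
by have -> : t = 0 by apply/le_anti; rewrite t0 tle.
Qed.

Lemma integrable_itv_comp (t : R) {g psi : R -> R} {M : R} :
  continuous g -> (forall x, `|g x| <= M) -> measurable_fun setT psi ->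
  leb.-integrable `[0, t] (EFin \o (fun s => g (psi s))).
Proof.
move=> cg gM mpsi.
apply: measurable_bounded_integrable => //.
- have [t0|t0] := leP 0 t.
    by move: (lebesgue_measure_itv0 t t0) => /= ->; exact: ltry.
  by rewrite (_ : `[0, t]%classic = set0) ?measure0 // set_itv_ge // bnd_simp -ltNge.
- exact: measurable_funS (measurableT_comp (continuous_measurable_fun cg) mpsi).
- exists M; split; first exact: num_real.
  by move=> N MN x _; apply: le_trans (gM _) (ltW MN).
Qed.

Lemma integrable_itv_scaled_comp (t k : R) {f psi : R -> R} :
  continuous f -> (forall x, `|f x| <= 1) -> measurable_fun setT psi ->
  leb.-integrable `[0, t] (EFin \o (fun s => k * f (psi s))).
Proof.
move=> cf f1 mpsi.
have ckf : continuous (fun x => k * f x).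
  by move=> x; apply: cvgM; [exact: cvg_cst | exact: cf].
have kfM x : `|k * f x| <= `|k| by rewrite normrM ler_piMr.
exact: (integrable_itv_comp t ckf kfM mpsi).
Qed.

Lemma integrable_itv_cst (t c : R) : leb.-integrable `[0, t] (EFin \o (fun=> c)).
Proof.
by apply: (@integrable_itv_comp t (fun=> c) id `|c|) => // x; exact: cvg_cst.
Qed.

Lemma Rintegral_itv_cst (t c : R) : 0 <= t -> \int[leb]_(s in `[0, t]) c = c * t.
Proof.
move=> t0; rewrite Rintegral_cst //.
by have -> : fine (leb `[0, t]) = t by rewrite lebesgue_measure_itv0.
Qed.

(* With r the length of (a, b): r^2 = \int (a cos + b sin) <= \int r = r t. *)
Lemma hypot_Rintegral_cos_sin_le (psi : R -> R) (t : R) :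
  measurable_fun setT psi -> 0 <= t ->
  hypot (\int[leb]_(s in `[0, t]) cos (psi s))
        (\int[leb]_(s in `[0, t]) sin (psi s)) <= t.
Proof.
move=> mpsi t0.
set a := \int[leb]_(s in _) _; set b := \int[leb]_(s in _) _.
have int_cos := integrable_itv_comp t (@continuous_cos R) (@cos_max R) mpsi.
have int_sin := integrable_itv_comp t (@continuous_sin R) (@sin_max R) mpsi.
set r := hypot a b.
have r2 : r ^+ 2 = \int[leb]_(s in `[0, t]) (a * cos (psi s) + b * sin (psi s)).
  rewrite sqr_hypot RintegralD ?RintegralZl ?expr2 //.
  - exact: (integrable_itv_scaled_comp t a (@continuous_cos R) (@cos_max R) mpsi).
  - exact: (integrable_itv_scaled_comp t b (@continuous_sin R) (@sin_max R) mpsi).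
have : r ^+ 2 <= r * t.
  rewrite r2 -Rintegral_itv_cst //; apply: le_Rintegral => //.
  - apply: (@integrable_itv_comp t (fun x => a * cos x + b * sin x) psi
                                  (`|a| + `|b|)) mpsi.
      move=> x; apply: cvgD; apply: cvgM; try exact: cvg_cst.
        exact: continuous_cos.
      exact: continuous_sin.
    move=> x; apply: le_trans (ler_normD _ _) _.
    by apply: lerD; rewrite normrM ler_piMr // ?cos_max ?sin_max.
  - exact: integrable_itv_cst.
  - by move=> x _; have := ler_dot_hypot a b (cos (psi x)) (sin (psi x));
      rewrite hypot_cos_sin mulr1.
have := hypot_ge0 a b; rewrite -/r; nra.
Qed.

End IntegralsOnSegment.

Section Trajectories.
Context {R : realType}.
Notation leb := (@lebesgue_measure R).
Variables (mu x0 y0 : R).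

Lemma traj_xE (psi : R -> R) (t : R) : measurable_fun setT psi -> 0 <= t ->
  traj_x mu x0 psi t = x0 - t + mu * \int[leb]_(s in `[0, t]) cos (psi s).
Proof.
move=> mpsi t0.
have int_cos := integrable_itv_comp t (@continuous_cos R) (@cos_max R) mpsi.
rewrite /traj_x RintegralB //.
- by rewrite RintegralZl // Rintegral_itv_cst // mul1r addrAC addrA.
- exact: (integrable_itv_scaled_comp t mu (@continuous_cos R) (@cos_max R) mpsi).
- exact: integrable_itv_cst.
Qed.

Lemma traj_yE (psi : R -> R) (t : R) : measurable_fun setT psi ->
  traj_y mu y0 psi t = y0 + mu * \int[leb]_(s in `[0, t]) sin (psi s).
Proof.
move=> mpsi; rewrite /traj_y RintegralZl //.
exact: (integrable_itv_comp t (@continuous_sin R) (@sin_max R) mpsi).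
Qed.

Lemma dist_at_le (psi : R -> R) (t : R) : 0 <= mu ->
  measurable_fun setT psi -> 0 <= t ->
  dist_at mu x0 y0 psi t <= hypot (x0 - t) y0 + mu * t.
Proof.
move=> mu0 mpsi t0.
rewrite -[dist_at _ _ _ _ _]/(hypot _ _) traj_xE // traj_yE //.
apply: le_trans (ler_hypotD _ _ _ _) _.
by rewrite hypotZ ger0_norm // lerD2l ler_wpM2l // hypot_Rintegral_cos_sin_le.
Qed.

Lemma dist_at_cst (th t : R) : 0 <= t ->
  dist_at mu x0 y0 (fun=> th) t =
  hypot (x0 - t + mu * t * cos th) (y0 + mu * t * sin th).
Proof.
move=> t0; rewrite -[dist_at _ _ _ _ _]/(hypot _ _).
have mth : measurable_fun setT (fun=> th : R) := measurable_cst th.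
rewrite traj_xE // traj_yE // !Rintegral_itv_cst //.
by rewrite (mulrC (cos th)) (mulrC (sin th)) !mulrA.
Qed.

End Trajectories.

Lemma sqr_max0_subr_le (R : realDomainType) (c t : R) :
  0 <= t -> (Num.max c 0 - c) ^+ 2 <= (t - c) ^+ 2.
Proof.
move=> t0; have [c_le0|c_gt0] := leP c 0.
- by rewrite sub0r sqrrN; nra.
- by rewrite subrr expr0n sqr_ge0.
Qed.

(* Completing the square in t; (mu, s) is the unit heading vector. *)
Lemma sqr_ray_vertex (R : comPzRingType) (mu s k x0 y0 t : R) :
  mu = k * s -> mu ^+ 2 + s ^+ 2 = 1 ->
  (x0 - t + mu * t * mu) ^+ 2 + (y0 + mu * t * s) ^+ 2 =
  x0 ^+ 2 + y0 ^+ 2 - (s * (x0 - k * y0)) ^+ 2 + (s * (t - (x0 - k * y0))) ^+ 2.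
Proof.
move=> -> unit_u; apply/eqP; rewrite -subr_eq0.
have -> : (x0 - t + k * s * t * (k * s)) ^+ 2 + (y0 + k * s * t * s) ^+ 2 -
  (x0 ^+ 2 + y0 ^+ 2 - (s * (x0 - k * y0)) ^+ 2 + (s * (t - (x0 - k * y0))) ^+ 2) =
  t * (2 * x0 - s ^+ 2 * t + ((k * s) ^+ 2 + s ^+ 2 - 1) * t) *
  ((k * s) ^+ 2 + s ^+ 2 - 1) by ring.
by rewrite unit_u subrr mulr0.
Qed.

Section Equilibrium.
Context {R : realType}.
Variables (mu x0 y0 : R).
Hypotheses (mu_gt0 : 0 < mu) (mu_lt1 : mu < 1).

Local Notation s := (Num.sqrt (1 - mu ^+ 2)).
Local Notation T_free := (x0 - mu / s * y0).

Let s_gt0 : 0 < s.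
Proof. by rewrite sqrtr_gt0 subr_gt0 expr_lt1 // ltW. Qed.

Lemma cos_psi_NE : cos (acos mu) = mu.
Proof. by rewrite acosK // in_itv /= !ltW // (lt_trans _ mu_gt0) // ltrN10. Qed.

Lemma sin_psi_NE : sin (acos mu) = s.
Proof. by rewrite sin_acos // !ltW // (lt_trans _ mu_gt0) // ltrN10. Qed.

Lemma dist_at_NE (t : R) : 0 <= t ->
  dist_at mu x0 y0 (psi_NE mu) t = hypot (x0 - t + mu * t * mu) (y0 + mu * t * s).
Proof. by move=> t0; rewrite dist_at_cst // cos_psi_NE sin_psi_NE. Qed.

Lemma dist_at_NE_vertex (t : R) : 0 <= t ->
  dist_at mu x0 y0 (psi_NE mu) t =
  Num.sqrt (x0 ^+ 2 + y0 ^+ 2 - (s * T_free) ^+ 2 + (s * (t - T_free)) ^+ 2).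
Proof.
move=> t0; rewrite dist_at_NE //; congr Num.sqrt; apply: sqr_ray_vertex.
  by rewrite divfK // gt_eqF.
by rewrite -sin_psi_NE -{1}cos_psi_NE cos2Dsin2.
Qed.

Lemma dist_at_NE_min (t : R) : 0 <= t ->
  dist_at mu x0 y0 (psi_NE mu) (T_NE mu x0 y0) <= dist_at mu x0 y0 (psi_NE mu) t.
Proof.
move=> t0; rewrite !dist_at_NE_vertex ?le_max ?lexx ?orbT //.
apply: ler_wsqrtr; rewrite lerD2l !exprMn ler_wpM2l ?sqr_ge0 //.
exact: sqr_max0_subr_le.
Qed.

(* At the optimal stopping time the disk of reachable points is centred on the
   ray of direction (mu, s), and the NE heading runs along that ray. *)
Lemma dist_at_NE_T_NE : 0 <= y0 ->
  dist_at mu x0 y0 (psi_NE mu) (T_NE mu x0 y0) =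
  hypot (x0 - T_NE mu x0 y0) y0 + mu * T_NE mu x0 y0.
Proof.
move=> y0_ge0; rewrite /T_NE; have [T_le0|T_gt0] := leP T_free 0.
  by rewrite dist_at_NE // !(mulr0, mul0r, addr0, subr0).
rewrite dist_at_NE ?ltW //; set T := T_free in T_gt0 *.
set w := y0 / s.
have w_ge0 : 0 <= w by rewrite divr_ge0 // ltW.
have x0_T : x0 - T = w * mu by rewrite /T /w; ring.
have y0_w : y0 = w * s by rewrite /w divfK // gt_eqF.
have unit_u : hypot mu s = 1.
  by have := hypot_cos_sin (acos mu); rewrite cos_psi_NE sin_psi_NE.
clearbody T w; rewrite x0_T y0_w -!mulrDl !hypotZ unit_u !mulr1.
have muT_ge0 : 0 <= mu * T := mulr_ge0 (ltW mu_gt0) (ltW T_gt0).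
by rewrite !ger0_norm // addr_ge0.
Qed.

End Equilibrium.

Theorem theorem3 (R : realType) (mu x0 y0 : R)
  (hmu0 : 0 < mu) (hmu1 : mu < 1) (hy0 : 0 <= y0)
  (hfeas : admissible mu x0 y0 (psi_NE mu) (T_NE mu x0 y0)) :
  is_equilibrium mu x0 y0 (psi_NE mu) (T_NE mu x0 y0).
Proof.
have T_NE_ge0 : 0 <= T_NE mu x0 y0 by rewrite /T_NE le_max lexx orbT.
split; first exact: hfeas.
split=> [psi' [_ [mpsi' _]] | T' [T'_ge0 _]].
- rewrite dist_at_NE_T_NE //.
  exact: dist_at_le (ltW hmu0) mpsi' T_NE_ge0.
- exact: dist_at_NE_min.
Qed.
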